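(* Let $C,C'$ be finite-dimensional complexes of complex vector spaces whose differentials are matrices with entries in $\mathbb C[k_1,\dots,k_m]$, both having homology only along $Q=0$ for an irreducible $Q\in\mathbb C[k]$. Let $Q(q)=0$ and suppose there is a homotopy equivalence $C\leftrightarrow C'$ given by four matrices with entries in $\mathbb C(k)$ that are regular at $q$. Then $q$ is a regular homology point of $C$ if and only if it is a regular homology point of $C'$.
   Context: A homotopy equivalence: chain maps $R:C\to C'$, $L:C'\to C$ and $u\in\operatorname{End}^{-1}(C)$, $u'\in\operatorname{End}^{-1}(C')$ with $LR=1-du-ud$, $RL=1-d'u'-u'd'$ (here holding over $\mathbb C(k)$). For a complex $C$ with polynomial differential $d$, $\mathfrak h_k$ is the homology at $k$. A point $q$ is a regular homology point if $Q(q)=0$ and $q$ is a smooth point of $Q=0$; $\dim\mathfrak h_k=\dim\mathfrak h_q$ for all $k$ with $Q(k)=0$ in a Zariski neighborhood of $q$; and there is $\xi\in T_q\mathbb C^m$ with $\dot Q\ne0$ such that the differential induced on $\mathfrak h_q$ by $\dot d$ (derivative along $\xi$ at $q$) is exact. *)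

From HB Require Import structures.
From mathcomp Require Import all_boot all_order all_algebra.
From mathcomp Require Import fraction.
From mathcomp Require Import mpoly.
Set Implicit Arguments. Unset Strict Implicit. Unset Printing Implicit Defensive.
Import Order.TTheory GRing.Theory Num.Theory.
Local Open Scope ring_scope.

Notation Poly C m := {mpoly C[m]}.
Notation RatF C m := {fraction {mpoly C[m]}}.

Notation tofrac := (@FracField.tofrac _).
Notation "x %:F" := (@FracField.tofrac _ x) (format "x %:F") : ring_scope.

Section Defs.
Variables (C : numClosedFieldType) (m : nat).

Definition mconstant (p : Poly C m) : Prop := (msize p <= 1)%N.

(** irreducible element of C[k]: non-constant, and any factorization has a
    constant (= unit, as C is a field) factor. *)
Definition mirreducible (Q : Poly C m) : Prop :=
  ~ mconstant Q /\ forall A B : Poly C m, Q = A * B -> mconstant A \/ mconstant B.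

Definition evalmx (a b : nat) (d : 'M[Poly C m]_(a, b)) (k : 'I_m -> C)
  : 'M[C]_(a, b) := map_mx (fun p => p.@[k]) d.

Definition dermx (a b : nat) (d : 'M[Poly C m]_(a, b)) (q xi : 'I_m -> C)
  : 'M[C]_(a, b) := map_mx (fun p => \sum_(i < m) xi i * (p^`M(i)).@[q]) d.

(** dimension of the homology of (C^n, d(k)) (d(k)^2 = 0):
    dim ker d(k) - dim im d(k) *)
Definition hdim (n : nat) (d : 'M[Poly C m]_n) (k : 'I_m -> C) : nat :=
  ((n - \rank (evalmx d k)) - \rank (evalmx d k))%N.

(** A (graded) complex: C^n with grading deg : 'I_n -> G, G an abelian group,
    and a polynomial differential d (column-vector convention, d i j is the
    coefficient from basis vector j to basis vector i) of degree +one, with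
    d^2 = 0. *)
Definition is_complex (G : zmodType) (one : G) (n : nat) (deg : 'I_n -> G)
  (d : 'M[Poly C m]_n) : Prop :=
  d *m d = 0 /\ forall i j, d i j != 0 -> deg i = deg j + one.

Definition homology_along (n : nat) (d : 'M[Poly C m]_n) (Q : Poly C m) : Prop :=
  forall k : 'I_m -> C, Q.@[k] != 0 -> hdim d k = 0%N.

Definition regular_at (f : RatF C m) (q : 'I_m -> C) : Prop :=
  exists (p D : Poly C m), D.@[q] != 0 /\ f = p%:F / D%:F.

Definition regular_mx_at (a b : nat) (A : 'M[RatF C m]_(a, b)) (q : 'I_m -> C)
  : Prop := forall i j, regular_at (A i j) q.

Definition fracmx (a b : nat) (d : 'M[Poly C m]_(a, b)) : 'M[RatF C m]_(a, b) :=
  map_mx (fun p => p%:F) d.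

(** homotopy equivalence between (C^n, deg, d) and (C^n', deg', d') over C(k):
    chain maps R : C -> C', L : C' -> C (degree 0), homotopies u, u' of
    degree -one, with LR = 1 - du - ud and RL = 1 - d'u' - u'd'. *)
Definition homotopy_equivalence (G : zmodType) (one : G)
  (n n' : nat) (deg : 'I_n -> G) (deg' : 'I_n' -> G)
  (d : 'M[Poly C m]_n) (d' : 'M[Poly C m]_n')
  (R : 'M[RatF C m]_(n', n)) (L : 'M[RatF C m]_(n, n'))
  (u : 'M[RatF C m]_n) (u' : 'M[RatF C m]_n') : Prop :=
  (fracmx d' *m R = R *m fracmx d) /\
  (fracmx d *m L = L *m fracmx d') /\
  (forall i j, R i j != 0 -> deg' i = deg j) /\
  (forall i j, L i j != 0 -> deg i = deg' j) /\
  (forall i j, u i j != 0 -> deg i + one = deg j) /\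
  (forall i j, u' i j != 0 -> deg' i + one = deg' j) /\
  (L *m R = 1%:M - fracmx d *m u - u *m fracmx d) /\
  (R *m L = 1%:M - fracmx d' *m u' - u' *m fracmx d').

Definition regular_homology_point (n : nat) (d : 'M[Poly C m]_n)
  (Q : Poly C m) (q : 'I_m -> C) : Prop :=
  [/\ Q.@[q] = 0,
      (* smooth point of Q = 0: the gradient of Q at q is nonzero *)
      (exists i : 'I_m, (Q^`M(i)).@[q] != 0),
      (* constant homology dimension on Q = 0 in a Zariski neighbourhood
         D(g) = {g <> 0} of q *)
      (exists g : Poly C m, g.@[q] != 0 /\
         forall k : 'I_m -> C, Q.@[k] = 0 -> g.@[k] != 0 -> hdim d k = hdim d q) &
      (* some xi with dQ(xi) <> 0 such that the map induced by dot d on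
         the homology H(d(q)) = ker d(q) / im d(q) is exact *)
      (exists xi : 'I_m -> C,
         \sum_(i < m) xi i * (Q^`M(i)).@[q] != 0 /\
         forall v : 'cV[C]_n,
           evalmx d q *m v = 0 ->
           (exists z, dermx d q xi *m v = evalmx d q *m z) ->
           exists w : 'cV[C]_n, evalmx d q *m w = 0 /\
             exists z, v - dermx d q xi *m w = evalmx d q *m z)].

End Defs.

From HB Require Import structures.
From mathcomp Require Import all_boot all_order all_algebra.
From mathcomp Require Import fraction.
From mathcomp Require Import mpoly.
From mathcomp Require Import zify.
Set Implicit Arguments. Unset Strict Implicit. Unset Printing Implicit Defensive.
Import Order.TTheory GRing.Theory Num.Theory.
Local Open Scope ring_scope.

(* Clearing a common denominator D with D(q) <> 0, the homotopy equivalence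
   over C(k) becomes a polynomial one up to the scalar c = D^2: the composites
   L R and R L are chain homotopic to c, not to 1.  Wherever c does not
   vanish, evaluation still identifies the homology of C and C' (R injects
   homology, since L R = c on it), so the homology dimensions agree on the
   neighbourhood c <> 0 of q.  Differentiating the chain-map identities along
   xi at q shows that R and L, to first order, also intertwine the derivatives
   of d and d', which carries exactness of the map induced by the derivative
   from H(d(q)) to H(d'(q)). *)

Definition scalar_homotopy_equiv (K : comPzRingType) n n' (c : K)
    (e : 'M[K]_n) (e' : 'M[K]_n') (R : 'M[K]_(n', n)) (L : 'M[K]_(n, n'))
    (u : 'M[K]_n) (u' : 'M[K]_n') :=
  [/\ e' *m R = R *m e, e *m L = L *m e',
      L *m R = c%:M - e *m u - u *m e & R *m L = c%:M - e' *m u' - u' *m e'].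

Section ScalarHomotopy.
Variables (K : comPzRingType) (n n' : nat) (c : K)
  (e : 'M[K]_n) (e' : 'M[K]_n') (R : 'M[K]_(n', n)) (L : 'M[K]_(n, n'))
  (u : 'M[K]_n) (u' : 'M[K]_n').

Lemma scalar_homotopy_equiv_sym :
  scalar_homotopy_equiv c e e' R L u u' -> scalar_homotopy_equiv c e' e L R u' u.
Proof. by case. Qed.

Lemma scalar_homotopy_equivZ a :
  scalar_homotopy_equiv c e e' R L u u' ->
  scalar_homotopy_equiv (a * a * c) e e' (a *: R) (a *: L)
    ((a * a) *: u) ((a * a) *: u').
Proof.
have homZ k (f v g : 'M_k) : g = c%:M - f *m v - v *m f ->
    (a * a) *: g = (a * a * c)%:M - f *m ((a * a) *: v) - ((a * a) *: v) *m f.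
  by move=> ->; rewrite -scalemxAl -scalemxAr !scalerBr scale_scalar_mx.
case=> hR hL hLR hRL; split.
- by rewrite -scalemxAl -scalemxAr hR.
- by rewrite -scalemxAl -scalemxAr hL.
- by rewrite -scalemxAl -scalemxAr scalerA; exact: homZ.
- by rewrite -scalemxAl -scalemxAr scalerA; exact: homZ.
Qed.

Lemma map_scalar_homotopy_equiv (K' : comPzRingType) (f : {rmorphism K -> K'}) :
  scalar_homotopy_equiv c e e' R L u u' ->
  scalar_homotopy_equiv (f c) (map_mx f e) (map_mx f e') (map_mx f R) (map_mx f L)
    (map_mx f u) (map_mx f u').
Proof.
by case=> hR hL hLR hRL; split;
  rewrite -?map_scalar_mx -!map_mxM -?map_mxB ?hR ?hL ?hLR ?hRL.
Qed.

Lemma map_scalar_homotopy_equiv_inj (K' : comPzRingType) (f : {rmorphism K -> K'}) :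
  injective f ->
  scalar_homotopy_equiv (f c) (map_mx f e) (map_mx f e') (map_mx f R) (map_mx f L)
    (map_mx f u) (map_mx f u') ->
  scalar_homotopy_equiv c e e' R L u u'.
Proof.
move=> f_inj; have map_inj k l : injective (map_mx f : 'M_(k, l) -> _).
  move=> A B /matrixP AB; apply/matrixP=> i j.
  by apply: f_inj; have := AB i j; rewrite !mxE.
by case; rewrite -?map_scalar_mx -!map_mxM -?map_mxB => /map_inj hR /map_inj hL
  /map_inj hLR /map_inj hRL.
Qed.

End ScalarHomotopy.

Section FieldHomology.
Variable F : fieldType.

Definition homology_dim k (e : 'M[F]_k) := (k - \rank e - \rank e)%N.

Section HomologyDim.
Variables (n n' : nat) (e : 'M[F]_n) (e' : 'M[F]_n')
  (R : 'M[F]_(n', n)) (L : 'M[F]_(n, n')) (w : 'M[F]_n) (c : F).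
Hypotheses (c_neq0 : c != 0) (ee : e *m e = 0) (e'e' : e' *m e' = 0)
  (eL : e *m L = L *m e') (e'R : e' *m R = R *m e)
  (LR : L *m R = c%:M - e *m w - w *m e).

(* Row vectors, i.e. the dual complex, which has the same homology dimension:
   on cycles, X L R = c X - (X w) e. *)
Lemma boundary_of_mapL_boundary p (X : 'M_(p, n)) :
  X *m e = 0 -> (X *m L <= e')%MS -> (X <= e)%MS.
Proof.
move=> Xe /submxP[Y XL].
have cX : c *: X = (Y *m R + X *m w) *m e.
  have := congr1 (mulmx^~ R) XL.
  rewrite -mulmxA LR -mulmxA e'R mulmxA !mulmxBr mul_mx_scalar.
  rewrite mulmxA Xe mul0mx subr0.
  by move/eqP; rewrite subr_eq => /eqP ->; rewrite mulmxDl !mulmxA.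
by rewrite -(scalerK c_neq0 X) cX scalemx_sub // submxMl.
Qed.

Lemma homology_dim_le : (homology_dim e <= homology_dim e')%N.
Proof.
set S := (kermx e :\: e)%MS.
have Se : S *m e = 0 by apply/sub_kermxP; exact: diffmxSl.
have S_inj p (X : 'M_(p, n)) : (X <= S)%MS -> (X *m L <= e')%MS -> X = 0.
  move=> XS XL; apply/eqP; rewrite -submx0 -(capmx_diff (kermx e) e) sub_capmx XS.
  apply: boundary_of_mapL_boundary XL.
  by move/submxP: XS => [Z ->]; rewrite -mulmxA Se mulmx0.
have rSL : \rank (S *m L) = \rank S.
  apply/mxrank_injP/eqP; apply: S_inj; first exact: capmxSl.
  by have/sub_kermxP -> := capmxSr S (kermx L); exact: sub0mx.
have SLe' : (S *m L :&: e')%MS = 0.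
  have /submxP[A YA] := capmxSl (S *m L) e'.
  rewrite YA mulmxA (S_inj _ (A *m S)) ?mul0mx ?submxMl //.
  by rewrite -mulmxA -YA capmxSr.
have rS : \rank S = homology_dim e.
  have := mxrank_cap_compl (kermx e) e.
  rewrite (capmx_idPr (introT sub_kermxP ee)) mxrank_ker -/S /homology_dim; lia.
have : (\rank (S *m L + e')%MS <= \rank (kermx e'))%N.
  by apply: mxrankS; rewrite addsmx_sub; apply/andP; split; apply/sub_kermxP;
    rewrite // -mulmxA -eL mulmxA Se mul0mx.
have := mxrank_sum_cap (S *m L) e'.
rewrite SLe' mxrank0 rSL rS mxrank_ker /homology_dim; lia.
Qed.

End HomologyDim.

Lemma homology_dim_eq n n' c (e : 'M[F]_n) (e' : 'M[F]_n') R L u u' :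
  c != 0 -> e *m e = 0 -> e' *m e' = 0 ->
  scalar_homotopy_equiv c e e' R L u u' -> homology_dim e = homology_dim e'.
Proof.
move=> c_neq0 ee e'e' [e'R eL LR RL]; apply/eqP.
by rewrite eqn_leq (homology_dim_le c_neq0 ee e'e' eL e'R LR)
  (homology_dim_le c_neq0 e'e' ee e'R eL RL).
Qed.

Definition induced_exact n (d0 d1 : 'M[F]_n) :=
  forall v : 'cV[F]_n, d0 *m v = 0 -> (exists z, d1 *m v = d0 *m z) ->
  exists w : 'cV[F]_n, d0 *m w = 0 /\ exists z, v - d1 *m w = d0 *m z.

Lemma induced_exact_transfer n n' (d0 d1 : 'M[F]_n) (e0 e1 : 'M[F]_n')
    (R0 R1 : 'M[F]_(n', n)) (L0 L1 : 'M[F]_(n, n')) (u' : 'M[F]_n') c :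
  c != 0 ->
  e0 *m R0 = R0 *m d0 -> e1 *m R0 + e0 *m R1 = R1 *m d0 + R0 *m d1 ->
  d0 *m L0 = L0 *m e0 -> d1 *m L0 + d0 *m L1 = L1 *m e0 + L0 *m e1 ->
  R0 *m L0 = c%:M - e0 *m u' - u' *m e0 ->
  induced_exact d0 d1 -> induced_exact e0 e1.
Proof.
move=> c_neq0 hR0 hR1 hL0 hL1 RL d_exact v e0v [z' e1v].
have d0Lv : d0 *m (L0 *m v) = 0 by rewrite mulmxA hL0 -mulmxA e0v mulmx0.
have d1Lv : d1 *m (L0 *m v) = d0 *m (L0 *m z' - L1 *m v).
  have := congr1 (mulmx^~ v) hL1.
  rewrite !mulmxDl -!mulmxA e0v mulmx0 add0r e1v mulmxBr !mulmxA hL0 => <-.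
  by rewrite addrK.
have [w [d0w [z Lv]]] := d_exact _ d0Lv (ex_intro _ _ d1Lv).
have e1Rw : e1 *m (R0 *m w) = c *: v - e0 *m (u' *m v + R0 *m z + R1 *m w).
  have := congr1 (mulmx^~ w) hR1.
  rewrite !mulmxDl -!mulmxA d0w mulmx0 add0r => /(canRL (addrK _)) ->.
  have -> : d1 *m w = L0 *m v - d0 *m z by rewrite -Lv opprB addrC subrK.
  rewrite mulmxBr [R0 *m (L0 *m v)]mulmxA RL !mulmxBl mul_scalar_mx.
  rewrite -[u' *m e0 *m v]mulmxA e0v mulmx0 subr0 -[e0 *m u' *m v]mulmxA.
  by rewrite [R0 *m (d0 *m z)]mulmxA -hR0 -mulmxA !mulmxDr !opprD !addrA.
exists (c^-1 *: (R0 *m w)); split.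
  by rewrite -scalemxAr mulmxA hR0 -mulmxA d0w mulmx0 scaler0.
exists (c^-1 *: (u' *m v + R0 *m z + R1 *m w)).
by rewrite -!scalemxAr e1Rw scalerBr scalerA mulVf // scale1r opprB addrC subrK.
Qed.

End FieldHomology.

Section Polynomial.
Variables (C : numClosedFieldType) (m : nat).
Implicit Types (q k xi : 'I_m -> C) (p r D c : {mpoly C[m]}).

Definition mderiv_dir q xi p : C := \sum_(i < m) xi i * (p^`M(i)).@[q].

Lemma mderiv_dirD q xi : {morph mderiv_dir q xi : p r / p + r}.
Proof.
by move=> p r; rewrite /mderiv_dir -big_split; apply: eq_bigr => i _;
  rewrite mderivD mevalD mulrDr.
Qed.

Lemma mderiv_dir0 q xi : mderiv_dir q xi 0 = 0.
Proof. by rewrite /mderiv_dir big1 // => i _; rewrite mderiv0 meval0 mulr0. Qed.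

Lemma mderiv_dirM q xi p r :
  mderiv_dir q xi (p * r) = mderiv_dir q xi p * r.@[q] + p.@[q] * mderiv_dir q xi r.
Proof.
rewrite /mderiv_dir mulr_suml mulr_sumr -big_split; apply: eq_bigr => i _.
by rewrite mderivM mevalD !mevalM mulrDr mulrA mulrCA.
Qed.

Lemma dermxM a b e (A : 'M[{mpoly C[m]}]_(a, b)) (B : 'M_(b, e)) q xi :
  dermx (A *m B) q xi = dermx A q xi *m evalmx B q + evalmx A q *m dermx B q xi.
Proof.
apply/matrixP=> i j; rewrite -![dermx _ q xi]/(map_mx (mderiv_dir q xi) _) !mxE.
rewrite -big_split.
rewrite (big_morph _ (mderiv_dirD q xi) (mderiv_dir0 q xi)).
by apply: eq_bigr => l _; rewrite mderiv_dirM !mxE.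
Qed.

Definition clears_denominators D a b (A : 'M[{fraction {mpoly C[m]}}]_(a, b)) :=
  exists At, fracmx At = D%:F *: A.

Lemma clears_denominatorsMr D E a b (A : 'M_(a, b)) :
  clears_denominators D A -> clears_denominators (D * E) A.
Proof.
case=> At hAt; exists (E *: At).
by rewrite /fracmx map_mxZ -/(fracmx _) hAt scalerA rmorphM mulrC.
Qed.

Lemma clears_denominatorsMl D E a b (A : 'M_(a, b)) :
  clears_denominators D A -> clears_denominators (E * D) A.
Proof. by rewrite mulrC; exact: clears_denominatorsMr. Qed.

Lemma regular_mx_clears_denominators a b (A : 'M_(a, b)) q :
  regular_mx_at A q -> exists2 D, D.@[q] != 0 & clears_denominators D A.
Proof.
move=> regA.
have /fin_all_exists[f hf] : forall x : 'I_a * 'I_b, exists f : _ * _,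
    (f.2).@[q] != 0 /\ A x.1 x.2 = (f.1)%:F / (f.2)%:F.
  by move=> [i j]; have [p [D [Dq ->]]] := regA i j; exists (p, D).
exists (\prod_x (f x).2).
  by rewrite rmorph_prod; apply/prodf_neq0 => x _; case: (hf x).
exists (\matrix_(i, j) ((f (i, j)).1 * \prod_(x | x != (i, j)) (f x).2)).
apply/matrixP=> i j; rewrite !mxE [in RHS](bigD1 (i, j)) //= !tofracM rmorph_prod.
have [fq ->] := hf (i, j); have f0 : (f (i, j)).2%:F != 0.
  by rewrite tofrac_eq0; apply: contraNneq fq => ->; rewrite meval0.
by rewrite mulrAC [_ * (_ / _)]mulrC divfK.
Qed.

Lemma homotopy_equivalence_clear_denominators (G : zmodType) (one : G) n n'
    (deg : 'I_n -> G) (deg' : 'I_n' -> G) (d : 'M_n) (d' : 'M_n')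
    (R : 'M_(n', n)) (L : 'M_(n, n')) (u : 'M_n) (u' : 'M_n') q :
  homotopy_equivalence one deg deg' d d' R L u u' ->
  regular_mx_at R q -> regular_mx_at L q -> regular_mx_at u q -> regular_mx_at u' q ->
  exists c Rt Lt ut ut', c.@[q] != 0 /\ scalar_homotopy_equiv c d d' Rt Lt ut ut'.
Proof.
move=> [d'R [dL [_ [_ [_ [_ [LR RL]]]]]]].
move=> /regular_mx_clears_denominators[D1 D1q cR].
move=> /regular_mx_clears_denominators[D2 D2q cL].
move=> /regular_mx_clears_denominators[D3 D3q cu].
move=> /regular_mx_clears_denominators[D4 D4q cu'].
pose D := D1 * D2 * D3 * D4.
have [Rt hRt] : clears_denominators D R by do 3 apply: clears_denominatorsMr.
have [Lt hLt] : clears_denominators D L.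
  by do 2 apply: clears_denominatorsMr; apply: clears_denominatorsMl.
have [ut hut] : clears_denominators (D * D) u.
  by do 2 apply: clears_denominatorsMr; apply: clears_denominatorsMl.
have [ut' hut'] : clears_denominators (D * D) u'.
  by apply: clears_denominatorsMr; apply: clears_denominatorsMl.
exists (D * D), Rt, Lt, ut, ut'; split; first by rewrite !mevalM !mulf_neq0.
have tofrac_inj : injective (@tofrac {mpoly C[m]}).
  by move=> p r /eqP; rewrite tofrac_eq => /eqP.
apply: (map_scalar_homotopy_equiv_inj tofrac_inj).
have := scalar_homotopy_equivZ D%:F (And4 d'R dL LR RL).
by rewrite mulr1 -tofracM -hRt -hLt -hut -hut'.
Qed.

Lemma hdim_eq_of_scalar_homotopy_equiv n n' c (d : 'M_n) (d' : 'M_n')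
    Rt Lt ut ut' k :
  c.@[k] != 0 -> d *m d = 0 -> d' *m d' = 0 ->
  scalar_homotopy_equiv c d d' Rt Lt ut ut' -> hdim d k = hdim d' k.
Proof.
move=> ck dd d'd' /(map_scalar_homotopy_equiv (meval k)).
by apply: homology_dim_eq ck _ _; rewrite -map_mxM ?dd ?d'd' map_mx0.
Qed.

Lemma regular_homology_point_transfer n n' c (d : 'M_n) (d' : 'M_n')
    Rt Lt ut ut' Q q :
  c.@[q] != 0 -> d *m d = 0 -> d' *m d' = 0 ->
  scalar_homotopy_equiv c d d' Rt Lt ut ut' ->
  regular_homology_point d Q q -> regular_homology_point d' Q q.
Proof.
move=> cq dd d'd' hom [Qq smooth [g [gq g_const]] [xi [xiQ d_exact]]].
have hdim_eq k : c.@[k] != 0 -> hdim d k = hdim d' k.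
  by move=> ck; apply: hdim_eq_of_scalar_homotopy_equiv hom.
split=> //.
  exists (g * c); split; first by rewrite mevalM mulf_neq0.
  move=> k Qk; rewrite mevalM mulf_eq0 negb_or => /andP[gk ck].
  by rewrite -!hdim_eq // g_const.
exists xi; split=> //.
have [d'Rt dLt _ _] := hom.
have [d'R dL _ RL] := map_scalar_homotopy_equiv (meval q) hom.
apply: (induced_exact_transfer (R1 := dermx Rt q xi) (L1 := dermx Lt q xi)
  cq d'R _ dL _ RL d_exact).
  by rewrite -!dermxM d'Rt.
by rewrite -!dermxM dLt.
Qed.

End Polynomial.

Theorem mainTheorem6 (C : numClosedFieldType) (m : nat) (G : zmodType) (one : G)
  (n n' : nat) (deg : 'I_n -> G) (deg' : 'I_n' -> G)
  (d : 'M[{mpoly C[m]}]_n) (d' : 'M[{mpoly C[m]}]_n')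
  (Q : {mpoly C[m]}) (q : 'I_m -> C)
  (R : 'M[{fraction {mpoly C[m]}}]_(n', n)) (L : 'M[{fraction {mpoly C[m]}}]_(n, n'))
  (u : 'M[{fraction {mpoly C[m]}}]_n) (u' : 'M[{fraction {mpoly C[m]}}]_n') :
  is_complex one deg d -> is_complex one deg' d' ->
  mirreducible Q ->
  homology_along d Q -> homology_along d' Q ->
  Q.@[q] = 0 ->
  homotopy_equivalence one deg deg' d d' R L u u' ->
  regular_mx_at R q -> regular_mx_at L q ->
  regular_mx_at u q -> regular_mx_at u' q ->
  (regular_homology_point d Q q <-> regular_homology_point d' Q q).
Proof.
move=> [dd _] [d'd' _] _ _ _ _ hom regR regL regu regu'.
have [c [Rt [Lt [ut [ut' [cq hom_c]]]]]] :=
  homotopy_equivalence_clear_denominators hom regR regL regu regu'.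
split; first exact: regular_homology_point_transfer hom_c.
exact: regular_homology_point_transfer (scalar_homotopy_equiv_sym hom_c).
Qed.
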